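(* If a Markov category $\mathcal C$ is causal, then $\mathcal C$ is relatively positive.
   Context: A Markov category is a symmetric monoidal category $(\mathcal C,\otimes,I)$ with commutative comonoids $\mathrm{copy}_X\colon X\to X\otimes X$, $\mathrm{del}_X\colon X\to I$ compatible with $\otimes$, with $I$ terminal. For $m\colon\Theta\to A$ and $f,g\colon A\to Z$, $f$ and $g$ are $m$-almost surely equal if $(\mathrm{id}_A\otimes f)\circ\mathrm{copy}_A\circ m=(\mathrm{id}_A\otimes g)\circ\mathrm{copy}_A\circ m$. $\mathcal C$ is relatively positive if for all $p\colon\Theta\to X$, $f\colon X\to Y$, $g\colon Y\to Z$ such that $\mathrm{copy}_Z\circ g\circ f$ and $((g\circ f)\otimes(g\circ f))\circ\mathrm{copy}_X$ are $p$-almost surely equal, the morphisms $(\mathrm{id}_Y\otimes g)\circ\mathrm{copy}_Y\circ f$ and $(f\otimes(g\circ f))\circ\mathrm{copy}_X$ are $p$-almost surely equal. $\mathcal C$ is causal if for all $f\colon A\to W$, $g\colon W\to X$, $h_1,h_2\colon X\to Y$ with $(\mathrm{id}_X\otimes h_1)\circ\mathrm{copy}_X\circ g\circ f=(\mathrm{id}_X\otimes h_2)\circ\mathrm{copy}_X\circ g\circ f$, also $\big(\mathrm{id}_W\otimes((\mathrm{id}_X\otimes h_1)\circ\mathrm{copy}_X\circ g)\big)\circ\mathrm{copy}_W\circ f=\big(\mathrm{id}_W\otimes((\mathrm{id}_X\otimes h_2)\circ\mathrm{copy}_X\circ g)\big)\circ\mathrm{copy}_W\circ f$. *)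

(* Hom-sets are
   types and equality of morphisms is Leibniz equality. *)

Set Implicit Arguments.

Record MarkovCat := {
  ob : Type;
  hom : ob -> ob -> Type;
  idm : forall A, hom A A;
  comp : forall A B C, hom B C -> hom A B -> hom A C;
  comp_idl : forall A B (f : hom A B), comp (idm B) f = f;
  comp_idr : forall A B (f : hom A B), comp f (idm A) = f;
  comp_assoc : forall A B C D (h : hom C D) (g : hom B C) (f : hom A B),
      comp h (comp g f) = comp (comp h g) f;

  tens : ob -> ob -> ob;
  tensm : forall A B C D, hom A B -> hom C D -> hom (tens A C) (tens B D);
  tensm_id : forall A B, tensm (idm A) (idm B) = idm (tens A B);
  tensm_comp : forall A B C A' B' C' (g : hom B C) (f : hom A B)
      (g' : hom B' C') (f' : hom A' B'),
      tensm (comp g f) (comp g' f') = comp (tensm g g') (tensm f f');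
  unit : ob;

  assoc : forall A B C, hom (tens (tens A B) C) (tens A (tens B C));
  assoc_inv : forall A B C, hom (tens A (tens B C)) (tens (tens A B) C);
  assoc_inv_l : forall A B C, comp (assoc_inv A B C) (assoc A B C) = idm _;
  assoc_inv_r : forall A B C, comp (assoc A B C) (assoc_inv A B C) = idm _;
  lunit : forall A, hom (tens unit A) A;
  lunit_inv : forall A, hom A (tens unit A);
  lunit_inv_l : forall A, comp (lunit_inv A) (lunit A) = idm _;
  lunit_inv_r : forall A, comp (lunit A) (lunit_inv A) = idm _;
  runit : forall A, hom (tens A unit) A;
  runit_inv : forall A, hom A (tens A unit);
  runit_inv_l : forall A, comp (runit_inv A) (runit A) = idm _;
  runit_inv_r : forall A, comp (runit A) (runit_inv A) = idm _;
  braid : forall A B, hom (tens A B) (tens B A);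

  assoc_nat : forall A A' B B' C C' (f : hom A A') (g : hom B B') (h : hom C C'),
      comp (assoc A' B' C') (tensm (tensm f g) h)
      = comp (tensm f (tensm g h)) (assoc A B C);
  lunit_nat : forall A B (f : hom A B),
      comp (lunit B) (tensm (idm unit) f) = comp f (lunit A);
  runit_nat : forall A B (f : hom A B),
      comp (runit B) (tensm f (idm unit)) = comp f (runit A);
  braid_nat : forall A A' B B' (f : hom A A') (g : hom B B'),
      comp (braid A' B') (tensm f g) = comp (tensm g f) (braid A B);

  pentagon : forall A B C D,
      comp (assoc A B (tens C D)) (assoc (tens A B) C D)
      = comp (tensm (idm A) (assoc B C D))
          (comp (assoc A (tens B C) D) (tensm (assoc A B C) (idm D)));
  triangle : forall A B,
      comp (tensm (idm A) (lunit B)) (assoc A unit B)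
      = tensm (runit A) (idm B);
  hexagon : forall A B C,
      comp (assoc B C A) (comp (braid A (tens B C)) (assoc A B C))
      = comp (tensm (idm B) (braid A C))
          (comp (assoc B A C) (tensm (braid A B) (idm C)));
  braid_sym : forall A B, comp (braid B A) (braid A B) = idm (tens A B);

  copy : forall X, hom X (tens X X);
  del : forall X, hom X unit;
  copy_counit_l : forall X,
      comp (lunit X) (comp (tensm (del X) (idm X)) (copy X)) = idm X;
  copy_counit_r : forall X,
      comp (runit X) (comp (tensm (idm X) (del X)) (copy X)) = idm X;
  copy_coassoc : forall X,
      comp (assoc X X X) (comp (tensm (copy X) (idm X)) (copy X))
      = comp (tensm (idm X) (copy X)) (copy X);
  copy_comm : forall X, comp (braid X X) (copy X) = copy X;

  copy_tens : forall X Y,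
      copy (tens X Y)
      = comp (assoc_inv X Y (tens X Y))
        (comp (tensm (idm X) (assoc Y X Y))
        (comp (tensm (idm X) (tensm (braid X Y) (idm Y)))
        (comp (tensm (idm X) (assoc_inv X Y Y))
        (comp (assoc X X (tens Y Y))
              (tensm (copy X) (copy Y))))));
  del_tens : forall X Y,
      del (tens X Y) = comp (lunit unit) (tensm (del X) (del Y));
  copy_unit : copy unit = lunit_inv unit;
  del_unit : del unit = idm unit;

  del_unique : forall X (f : hom X unit), f = del X
}.

Arguments hom {m} _ _.
Arguments idm {m} A.
Arguments comp {m A B C} g f.
Arguments tensm {m A B C D} f g.
Arguments copy {m} X.
Arguments del {m} X.

Definition as_eq {C : MarkovCat} {T A Z : ob C} (m : hom T A) (f g : hom A Z) : Prop :=
  comp (comp (tensm (idm A) f) (copy A)) m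
  = comp (comp (tensm (idm A) g) (copy A)) m.

Definition relatively_positive (C : MarkovCat) : Prop :=
  forall (T X Y Z : ob C) (p : hom T X) (f : hom X Y) (g : hom Y Z),
    as_eq p (comp (copy Z) (comp g f))
            (comp (tensm (comp g f) (comp g f)) (copy X)) ->
    as_eq p (comp (comp (tensm (idm Y) g) (copy Y)) f)
            (comp (tensm f (comp g f)) (copy X)).

Definition causal (C : MarkovCat) : Prop :=
  forall (A W X Y : ob C) (f : hom A W) (g : hom W X) (h1 h2 : hom X Y),
    comp (comp (comp (tensm (idm X) h1) (copy X)) g) f
    = comp (comp (comp (tensm (idm X) h2) (copy X)) g) f ->
    comp (comp (tensm (idm W) (comp (comp (tensm (idm X) h1) (copy X)) g)) (copy W)) f
    = comp (comp (tensm (idm W) (comp (comp (tensm (idm X) h2) (copy X)) g)) (copy W)) f.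

(* Apply causality to [graph f ∘ p : T -> X ⊗ Y], to [idm X ⊗ g : X ⊗ Y -> X ⊗ Z] and to the
   two maps [proj_snd] and [(g ∘ f) ∘ proj_fst] out of [X ⊗ Z].  Up to reassociation, their
   graphs along [(idm X ⊗ g) ∘ graph f ∘ p] are [graph (copy Z ∘ g ∘ f) ∘ p] and
   [graph (((g ∘ f) ⊗ (g ∘ f)) ∘ copy X) ∘ p], which agree by hypothesis.  Causality then keeps the
   [Y]-component of [graph f ∘ p] as well; discarding the middle copy of [X ⊗ Z] leaves the two
   sides of the relative positivity conclusion. *)


Arguments tens {m} _ _.
Arguments unit {m}.
Arguments assoc {m} A B C.
Arguments assoc_inv {m} A B C.
Arguments lunit {m} A.
Arguments lunit_inv {m} A.
Arguments runit {m} A.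
Arguments braid {m} A B.
Arguments comp_idl {m A B} f.
Arguments comp_assoc {m A B C D} h g f.
Arguments tensm_id {m} A B.
Arguments assoc_inv_l {m} A B C.
Arguments assoc_inv_r {m} A B C.
Arguments lunit_inv_l {m} A.
Arguments lunit_inv_r {m} A.
Arguments runit_inv_r {m} A.
Arguments lunit_nat {m A B} f.
Arguments runit_nat {m A B} f.
Arguments del_unique {m X} f.

Local Notation "g ∘ f" := (comp g f) (at level 40, left associativity).
Local Notation "f ⊗ g" := (tensm f g) (at level 30).

Section MarkovCategoryFacts.

Context {C : MarkovCat}.

Lemma iso_transpose_r {A B D : ob C} (i : hom A B) (j : hom B A) (x : hom B D) (y : hom A D) :
  i ∘ j = idm B -> x ∘ i = y -> x = y ∘ j.
Proof. intros Hij Hx. now rewrite <- Hx, <- comp_assoc, Hij, comp_idr. Qed.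

Lemma iso_transpose_l {A B D : ob C} (i : hom A B) (j : hom B A) (x : hom D A) (y : hom D B) :
  j ∘ i = idm A -> i ∘ x = y -> x = j ∘ y.
Proof. intros Hji Hx. now rewrite <- Hx, comp_assoc, Hji, comp_idl. Qed.

Lemma iso_cancel_r {A B D : ob C} (i : hom A B) (j : hom B A) (x y : hom B D) :
  i ∘ j = idm B -> x ∘ i = y ∘ i -> x = y.
Proof.
  intros Hij Hxy.
  now rewrite (iso_transpose_r i j x (x ∘ i)), Hxy, <- comp_assoc, Hij, comp_idr.
Qed.

Lemma iso_cancel_l {A B D : ob C} (i : hom A B) (j : hom B A) (x y : hom D A) :
  j ∘ i = idm A -> i ∘ x = i ∘ y -> x = y.
Proof.
  intros Hji Hxy.
  now rewrite (iso_transpose_l i j x (i ∘ x)), Hxy, comp_assoc, Hji, comp_idl.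
Qed.

Lemma tensm_idm_comp {A B D : ob C} (X : ob C) (g : hom B D) (f : hom A B) :
  idm X ⊗ (g ∘ f) = (idm X ⊗ g) ∘ (idm X ⊗ f).
Proof. now rewrite <- tensm_comp, comp_idl. Qed.

Lemma tensm_comp_idm {A B D : ob C} (X : ob C) (g : hom B D) (f : hom A B) :
  (g ∘ f) ⊗ idm X = (g ⊗ idm X) ∘ (f ⊗ idm X).
Proof. now rewrite <- tensm_comp, comp_idl. Qed.

Lemma tensm_split_l {A B A' B' : ob C} (f : hom A B) (g : hom A' B') :
  f ⊗ g = (f ⊗ idm B') ∘ (idm A ⊗ g).
Proof. now rewrite <- tensm_comp, comp_idl, comp_idr. Qed.

Lemma tensm_split_r {A B A' B' : ob C} (f : hom A B) (g : hom A' B') :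
  f ⊗ g = (idm B ⊗ g) ∘ (f ⊗ idm A').
Proof. now rewrite <- tensm_comp, comp_idl, comp_idr. Qed.

Lemma tensm_idm_inverse {A B : ob C} (i : hom A B) (j : hom B A) (D : ob C) :
  i ∘ j = idm B -> (i ⊗ idm D) ∘ (j ⊗ idm D) = idm (tens B D).
Proof. intros Hij. now rewrite <- tensm_comp, Hij, comp_idl, tensm_id. Qed.

Lemma assoc_inv_nat {A A' B B' D D' : ob C} (f : hom A A') (g : hom B B') (h : hom D D') :
  assoc_inv A' B' D' ∘ (f ⊗ (g ⊗ h)) = ((f ⊗ g) ⊗ h) ∘ assoc_inv A B D.
Proof.
  apply (iso_transpose_r _ _ _ _ (assoc_inv_r A B D)).
  rewrite <- comp_assoc, <- assoc_nat, comp_assoc, assoc_inv_l.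
  apply comp_idl.
Qed.

Lemma tensm_idm_assoc_inv {A B D E : ob C} (h : hom D E) :
  (idm (tens A B) ⊗ h) ∘ assoc_inv A B D = assoc_inv A B E ∘ (idm A ⊗ (idm B ⊗ h)).
Proof. now rewrite assoc_inv_nat, tensm_id. Qed.

Lemma tensm_unit_l_inj {A B : ob C} (f g : hom A B) : idm unit ⊗ f = idm unit ⊗ g -> f = g.
Proof.
  intros Hfg.
  rewrite (iso_transpose_r _ _ f _ (lunit_inv_r A) (eq_sym (lunit_nat f))),
          (iso_transpose_r _ _ g _ (lunit_inv_r A) (eq_sym (lunit_nat g))).
  now rewrite Hfg.
Qed.

Lemma tensm_unit_r_inj {A B : ob C} (f g : hom A B) : f ⊗ idm unit = g ⊗ idm unit -> f = g.
Proof.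
  intros Hfg.
  rewrite (iso_transpose_r _ _ f _ (runit_inv_r A) (eq_sym (runit_nat f))),
          (iso_transpose_r _ _ g _ (runit_inv_r A) (eq_sym (runit_nat g))).
  now rewrite Hfg.
Qed.

(* Kelly's consequences of the pentagon and triangle axioms. *)
Lemma lunit_tens_assoc (A B : ob C) :
  lunit (tens A B) ∘ assoc unit A B = lunit A ⊗ idm B.
Proof.
  apply tensm_unit_l_inj.
  apply (iso_cancel_r _ _ _ _ (assoc_inv_r unit (tens unit A) B)).
  apply (iso_cancel_r _ _ _ _ (tensm_idm_inverse _ _ B (assoc_inv_r unit unit A))).
  rewrite tensm_idm_comp, <- !comp_assoc, <- pentagon, comp_assoc, triangle.
  rewrite <- (tensm_id A B), <- assoc_nat, <- triangle, tensm_comp_idm.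
  now rewrite comp_assoc, assoc_nat, comp_assoc.
Qed.

Lemma tensm_runit_assoc (A B : ob C) :
  (idm A ⊗ runit B) ∘ assoc A B unit = runit (tens A B).
Proof.
  apply tensm_unit_r_inj.
  apply (iso_cancel_l _ _ _ _ (assoc_inv_l A B unit)).
  symmetry.
  rewrite <- triangle, <- (tensm_id A B), comp_assoc, assoc_nat, <- comp_assoc.
  rewrite pentagon, !comp_assoc, <- tensm_idm_comp, triangle, <- assoc_nat.
  now rewrite tensm_comp_idm, comp_assoc.
Qed.

Lemma del_tensm_copy (A : ob C) : (del A ⊗ idm A) ∘ copy A = lunit_inv A.
Proof.
  rewrite (iso_transpose_l (lunit A) (lunit_inv A) _ (idm A)).
  - apply comp_idr.
  - apply lunit_inv_l.
  - apply copy_counit_l.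
Qed.

(* Both sides are left inverses of [lunit_inv A = (del A ⊗ idm A) ∘ copy A]: the comonoid on [A]
   stands in for the hexagon argument. *)
Lemma runit_braid (A : ob C) : runit A ∘ braid unit A = lunit A.
Proof.
  rewrite (iso_transpose_r _ _ (runit A ∘ braid unit A) (idm A) (lunit_inv_l A)).
  - apply comp_idl.
  - rewrite <- del_tensm_copy, <- comp_assoc, (comp_assoc (braid _ _)), braid_nat.
    now rewrite <- comp_assoc, copy_comm, copy_counit_r.
Qed.

Definition proj_fst {A B : ob C} : hom (tens A B) A := runit A ∘ (idm A ⊗ del B).
Definition proj_snd {A B : ob C} : hom (tens A B) B := lunit B ∘ (del A ⊗ idm B).

Lemma proj_fst_copy (A : ob C) : proj_fst ∘ copy A = idm A.
Proof. unfold proj_fst. now rewrite <- comp_assoc, copy_counit_r. Qed.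

Lemma proj_snd_copy (A : ob C) : proj_snd ∘ copy A = idm A.
Proof. unfold proj_snd. now rewrite <- comp_assoc, copy_counit_l. Qed.

Lemma proj_fst_tensm {A A' B B' : ob C} (f : hom A A') (g : hom B B') :
  proj_fst ∘ (f ⊗ g) = f ∘ proj_fst.
Proof.
  unfold proj_fst.
  rewrite <- comp_assoc, <- tensm_comp, comp_idl, (del_unique (del B' ∘ g)).
  now rewrite tensm_split_l, comp_assoc, runit_nat, <- comp_assoc.
Qed.

Lemma proj_snd_tensm {A A' B B' : ob C} (f : hom A A') (g : hom B B') :
  proj_snd ∘ (f ⊗ g) = g ∘ proj_snd.
Proof.
  unfold proj_snd.
  rewrite <- comp_assoc, <- tensm_comp, comp_idl, (del_unique (del A' ∘ f)).
  now rewrite tensm_split_r, comp_assoc, lunit_nat, <- comp_assoc.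
Qed.

Lemma proj_fst_braid (A B : ob C) : proj_fst ∘ braid A B = @proj_snd A B.
Proof.
  unfold proj_fst, proj_snd.
  now rewrite <- comp_assoc, <- braid_nat, comp_assoc, runit_braid.
Qed.

Lemma proj_snd_assoc (A B D : ob C) : proj_snd ∘ assoc A B D = @proj_snd A B ⊗ idm D.
Proof.
  unfold proj_snd.
  rewrite <- comp_assoc, <- (tensm_id B D), <- assoc_nat, comp_assoc, lunit_tens_assoc.
  now rewrite <- tensm_comp_idm.
Qed.

Lemma tensm_proj_snd_assoc (A B D : ob C) :
  (idm A ⊗ proj_snd) ∘ assoc A B D = @proj_fst A B ⊗ idm D.
Proof.
  unfold proj_fst, proj_snd.
  rewrite tensm_idm_comp, <- comp_assoc, <- assoc_nat, comp_assoc, triangle.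
  now rewrite <- tensm_comp_idm.
Qed.

Lemma tensm_proj_fst_assoc (A B D : ob C) :
  (idm A ⊗ proj_fst) ∘ assoc A B D = @proj_fst (tens A B) D.
Proof.
  unfold proj_fst.
  rewrite tensm_idm_comp, <- comp_assoc, <- assoc_nat, comp_assoc, tensm_runit_assoc.
  now rewrite tensm_id.
Qed.

Definition graph {A B : ob C} (k : hom A B) : hom A (tens A B) := (idm A ⊗ k) ∘ copy A.

Lemma graph_idm (A : ob C) : graph (idm A) = copy A.
Proof. unfold graph. now rewrite tensm_id, comp_idl. Qed.

Lemma tensm_graph {A B D : ob C} (k : hom A B) (q : hom B D) :
  (idm A ⊗ q) ∘ graph k = graph (q ∘ k).
Proof. unfold graph. now rewrite comp_assoc, <- tensm_idm_comp. Qed.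

Lemma proj_snd_graph {A B : ob C} (k : hom A B) : proj_snd ∘ graph k = k.
Proof.
  unfold graph.
  now rewrite comp_assoc, proj_snd_tensm, <- comp_assoc, proj_snd_copy, comp_idr.
Qed.

Lemma braid_graph {A B : ob C} (k : hom A B) : braid A B ∘ graph k = (k ⊗ idm A) ∘ copy A.
Proof.
  unfold graph.
  now rewrite comp_assoc, braid_nat, <- comp_assoc, copy_comm.
Qed.

Lemma assoc_copy_graph {A B : ob C} (k : hom A B) :
  assoc A A B ∘ (copy A ⊗ idm B) ∘ graph k = graph (graph k).
Proof.
  unfold graph at 1 2.
  rewrite comp_assoc, <- (comp_assoc _ (copy A ⊗ idm B)), <- tensm_comp, comp_idl, comp_idr.
  rewrite (tensm_split_r (copy A) k), <- (tensm_id A A), comp_assoc, assoc_nat.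
  rewrite <- !comp_assoc, copy_coassoc.
  now rewrite comp_assoc, <- tensm_idm_comp.
Qed.

Lemma graph_tens {A B D : ob C} (q : hom (tens A B) D) :
  graph q = assoc_inv A B D
            ∘ (idm A ⊗ ((idm B ⊗ q) ∘ assoc B A B ∘ (braid A B ⊗ idm B) ∘ assoc_inv A B B))
            ∘ assoc A A (tens B B) ∘ (copy A ⊗ copy B).
Proof.
  unfold graph.
  rewrite copy_tens, !tensm_idm_comp, !comp_assoc.
  now rewrite <- (tensm_id A B), assoc_inv_nat.
Qed.

Lemma graph_proj_snd (A B : ob C) : graph (@proj_snd A B) = assoc_inv A B B ∘ (idm A ⊗ copy B).
Proof.
  assert (Hinner : (idm B ⊗ proj_snd) ∘ assoc B A B ∘ (braid A B ⊗ idm B) ∘ assoc_inv A B B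
                   = @proj_snd A (tens B B)).
  { rewrite tensm_proj_snd_assoc, <- tensm_comp_idm, proj_fst_braid.
    symmetry. apply (iso_transpose_r _ _ _ _ (assoc_inv_r A B B)), proj_snd_assoc. }
  rewrite graph_tens, Hinner, <- !comp_assoc, (comp_assoc (idm A ⊗ _)), tensm_proj_snd_assoc.
  now rewrite <- tensm_comp, proj_fst_copy, comp_idl.
Qed.

Lemma graph_proj_fst (A B : ob C) :
  graph (@proj_fst A B)
  = assoc_inv A B A ∘ (idm A ⊗ braid A B) ∘ assoc A A B ∘ (copy A ⊗ idm B).
Proof.
  assert (Hinner : (idm B ⊗ proj_fst) ∘ assoc B A B ∘ (braid A B ⊗ idm B) ∘ assoc_inv A B B
                   = braid A B ∘ (idm A ⊗ @proj_fst B B)).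
  { rewrite tensm_proj_fst_assoc, proj_fst_tensm, <- comp_assoc.
    now rewrite <- (iso_transpose_r _ _ _ _ (assoc_inv_r A B B) (tensm_proj_fst_assoc A B B)). }
  rewrite graph_tens, Hinner, tensm_idm_comp, <- !comp_assoc, (comp_assoc (idm A ⊗ (idm A ⊗ _))).
  rewrite <- assoc_nat, tensm_id, <- comp_assoc, <- tensm_comp, comp_idl, proj_fst_copy.
  now rewrite !comp_assoc.
Qed.

Lemma graph_comp_proj_snd_graph {A B D : ob C} (h : hom B D) (k : hom A B) :
  graph (h ∘ proj_snd) ∘ graph k = assoc_inv A B D ∘ graph (graph h ∘ k).
Proof.
  rewrite <- (tensm_graph proj_snd h), graph_proj_snd, comp_assoc, tensm_idm_assoc_inv.
  now rewrite <- !comp_assoc, !tensm_graph, comp_assoc.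
Qed.

Lemma graph_comp_proj_fst_graph {A B D : ob C} (h : hom A D) (k : hom A B) :
  graph (h ∘ proj_fst) ∘ graph k = assoc_inv A B D ∘ graph ((k ⊗ h) ∘ copy A).
Proof.
  rewrite <- (tensm_graph proj_fst h), graph_proj_fst, <- !comp_assoc.
  rewrite (comp_assoc (assoc A A B)), assoc_copy_graph, tensm_graph, braid_graph.
  rewrite comp_assoc, tensm_idm_assoc_inv, <- comp_assoc, tensm_graph, comp_assoc.
  now rewrite <- tensm_comp, comp_idl, comp_idr.
Qed.

Section RelativePositivity.

Context {T X Y Z : ob C} (p : hom T X) (f : hom X Y) (g : hom Y Z).

Lemma causal_premise_of_as_eq :
  as_eq p (copy Z ∘ (g ∘ f)) (((g ∘ f) ⊗ (g ∘ f)) ∘ copy X) ->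
  graph proj_snd ∘ (idm X ⊗ g) ∘ (graph f ∘ p)
  = graph (g ∘ f ∘ proj_fst) ∘ (idm X ⊗ g) ∘ (graph f ∘ p).
Proof.
  intros Hcopy.
  rewrite <- !comp_assoc, !(comp_assoc (idm X ⊗ g)), tensm_graph, !comp_assoc.
  rewrite <- (comp_idl (@proj_snd X Z)), graph_comp_proj_snd_graph, graph_comp_proj_fst_graph.
  rewrite graph_idm, <- !comp_assoc.
  f_equal. exact Hcopy.
Qed.

Lemma as_eq_of_causal_conclusion :
  graph (graph proj_snd ∘ (idm X ⊗ g)) ∘ (graph f ∘ p)
  = graph (graph (g ∘ f ∘ proj_fst) ∘ (idm X ⊗ g)) ∘ (graph f ∘ p) ->
  as_eq p (graph g ∘ f) ((f ⊗ (g ∘ f)) ∘ copy X).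
Proof.
  intros Hcausal.
  set (k := g ∘ f) in *.
  apply (f_equal (fun t => assoc X Y Z ∘ (idm (tens X Y) ⊗ proj_snd) ∘ t)) in Hcausal.
  rewrite <- !comp_assoc, !(comp_assoc (idm (tens X Y) ⊗ proj_snd)), !tensm_graph in Hcausal.
  rewrite !comp_assoc, !proj_snd_graph in Hcausal.
  rewrite proj_snd_tensm, <- (comp_assoc k), proj_fst_tensm, comp_idl in Hcausal.
  rewrite <- !comp_assoc, (comp_assoc (graph (g ∘ proj_snd))),
    (comp_assoc (graph (k ∘ proj_fst))) in Hcausal.
  rewrite graph_comp_proj_snd_graph, graph_comp_proj_fst_graph in Hcausal.
  rewrite !comp_assoc, assoc_inv_r, !comp_idl in Hcausal.
  exact Hcausal.
Qed.

End RelativePositivity.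

End MarkovCategoryFacts.

Theorem corollary2p28 (C : MarkovCat) : causal C -> relatively_positive C.
Proof.
  intros Hcausal T X Y Z p f g Hcopy.
  apply as_eq_of_causal_conclusion, Hcausal, causal_premise_of_as_eq, Hcopy.
Qed.
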